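(* Let $X$ be a metrizable $\sigma$-compact topological space, $Y$ a topological space, and $f\colon X\times Y\to\mathbb R$ a separately continuous function. Suppose $d$ is a metric inducing the topology of $X$ and $\mathcal K$ is a countable family of compact subsets of $X$ with $X=\bigcup_{K\in\mathcal K}K$, and suppose there is $\delta>0$ such that for each $x\in X$ the open ball $B_\delta(x)$ meets only finitely many $K\in\mathcal K$. Then $f$ is the pointwise limit of a sequence of continuous functions $X\times Y\to\mathbb R$ (with $X\times Y$ carrying the product topology). *)

From Stdlib Require Import Reals List.
Open Scope R_scope.

Definition is_topology {T : Type} (O : (T -> Prop) -> Prop) : Prop :=
  O (fun _ => True) /\
  O (fun _ => False) /\
  (forall U V, O U -> O V -> O (fun x => U x /\ V x)) /\
  (forall C : (T -> Prop) -> Prop, (forall U, C U -> O U) ->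
     O (fun x => exists U, C U /\ U x)).

Definition is_metric {T : Type} (d : T -> T -> R) : Prop :=
  (forall x y, 0 <= d x y) /\
  (forall x y, d x y = 0 <-> x = y) /\
  (forall x y, d x y = d y x) /\
  (forall x y z, d x z <= d x y + d y z).

Definition ball {T : Type} (d : T -> T -> R) (x : T) (r : R) : T -> Prop :=
  fun y => d x y < r.

Definition metric_open {T : Type} (d : T -> T -> R) (U : T -> Prop) : Prop :=
  forall x, U x -> exists e, 0 < e /\ forall y, ball d x e y -> U y.

Definition induces {T : Type} (d : T -> T -> R) (O : (T -> Prop) -> Prop) : Prop :=
  forall U, O U <-> metric_open d U.

Definition R_open : (R -> Prop) -> Prop := metric_open R_dist.

Definition is_compact {T : Type} (O : (T -> Prop) -> Prop) (K : T -> Prop) : Prop :=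
  forall C : (T -> Prop) -> Prop,
    (forall U, C U -> O U) ->
    (forall x, K x -> exists U, C U /\ U x) ->
    exists l : list (T -> Prop),
      (forall U, In U l -> C U) /\ (forall x, K x -> exists U, In U l /\ U x).

Definition sigma_compact {T : Type} (O : (T -> Prop) -> Prop) : Prop :=
  exists K : nat -> (T -> Prop), (forall n, is_compact O (K n)) /\
    forall x, exists n, K n x.

Definition prod_open {A B : Type} (OA : (A -> Prop) -> Prop) (OB : (B -> Prop) -> Prop)
  (W : A * B -> Prop) : Prop :=
  forall p, W p -> exists U V, OA U /\ OB V /\ U (fst p) /\ V (snd p) /\
    forall a b, U a -> V b -> W (a, b).

Definition continuous {A B : Type} (OA : (A -> Prop) -> Prop) (OB : (B -> Prop) -> Prop)
  (g : A -> B) : Prop :=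
  forall V, OB V -> OA (fun a => V (g a)).

Definition separately_continuous {X Y : Type} (OX : (X -> Prop) -> Prop)
  (OY : (Y -> Prop) -> Prop) (f : X * Y -> R) : Prop :=
  (forall y, continuous OX R_open (fun x => f (x, y))) /\
  (forall x, continuous OY R_open (fun y => f (x, y))).

From Stdlib Require Import Reals List Lra Lia IndefiniteDescription.
Open Scope R_scope.

(* Fix radii r_n -> 0 below delta / 2 and finite r_n-nets of each K k.  With
   the tent functions w_c(x) = max(0, r_n - d(c, x)), the n-th approximant is
   the w-weighted average of f(c, y) over the net points c of all K k that can
   come near x.  Since a ball of radius delta meets only finitely many K k, on
   the ball of radius delta/2 around any x0 this is one fixed finite sum of
   products of continuous functions of x and of y, divided by a positive
   continuous function of x; hence it is jointly continuous.  Pointwise, all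
   weights are concentrated within r_n of x, so continuity of f(., y) makes the
   average converge to f(x, y). *)

Definition Rsum_list {A : Type} (h : A -> R) (l : list A) : R :=
  fold_right (fun c s => h c + s) 0 l.

Lemma Rsum_list_app {A : Type} (h : A -> R) (l1 l2 : list A) :
  Rsum_list h (l1 ++ l2) = Rsum_list h l1 + Rsum_list h l2.
Proof. induction l1 as [|c l1 IH]; simpl; [ring | rewrite IH; ring]. Qed.

Lemma Rsum_list_eq0 {A : Type} (h : A -> R) (l : list A) :
  (forall c, In c l -> h c = 0) -> Rsum_list h l = 0.
Proof.
  induction l as [|c l IH]; simpl; intros H; [reflexivity|].
  rewrite H, IH by auto. ring.
Qed.

Lemma Rsum_list_ge0 {A : Type} (h : A -> R) (l : list A) :
  (forall c, In c l -> 0 <= h c) -> 0 <= Rsum_list h l.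
Proof.
  induction l as [|c l IH]; simpl; intros H; [lra|].
  assert (0 <= h c) by auto. assert (0 <= Rsum_list h l) by auto. lra.
Qed.

Lemma Rsum_list_gt0 {A : Type} (h : A -> R) (l : list A) (c : A) :
  (forall c, In c l -> 0 <= h c) -> In c l -> 0 < h c -> 0 < Rsum_list h l.
Proof.
  induction l as [|c0 l IH]; simpl; intros H Hin Hc; [contradiction|].
  assert (0 <= h c0) by auto.
  assert (0 <= Rsum_list h l) by (apply Rsum_list_ge0; auto).
  destruct Hin as [<-|Hin]; [lra|].
  assert (0 < Rsum_list h l) by (apply IH; auto). lra.
Qed.

Lemma Rsum_list_weighted_dev {A : Type} (w a : A -> R) (v eta : R) (l : list A) :
  (forall c, In c l -> 0 <= w c) ->
  (forall c, In c l -> 0 < w c -> Rabs (a c - v) <= eta) ->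
  Rabs (Rsum_list (fun c => w c * a c) l - v * Rsum_list w l) <= eta * Rsum_list w l.
Proof.
  induction l as [|c l IH]; simpl; intros Hw Ha.
  - rewrite Rmult_0_r, Rminus_0_r, Rabs_R0; lra.
  - assert (Hc : Rabs (w c * (a c - v)) <= eta * w c).
    { rewrite Rabs_mult, (Rabs_right (w c)) by (apply Rle_ge; auto).
      destruct (Rle_lt_or_eq_dec 0 (w c)) as [Hp|<-]; auto.
      - rewrite Rmult_comm. apply Rmult_le_compat_r; auto with real.
      - rewrite !Rmult_0_l, Rmult_0_r; lra. }
    assert (IHl := IH (fun c' H => Hw c' (or_intror H)) (fun c' H => Ha c' (or_intror H))).
    replace (w c * a c + Rsum_list (fun c => w c * a c) l - v * (w c + Rsum_list w l))
      with (w c * (a c - v) + (Rsum_list (fun c => w c * a c) l - v * Rsum_list w l))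
      by ring.
    eapply Rle_trans; [apply Rabs_triang | lra].
Qed.

Lemma Rsum_list_weighted_average {A : Type} (w a : A -> R) (v eta : R) (l : list A) :
  (forall c, In c l -> 0 <= w c) -> 0 < Rsum_list w l ->
  (forall c, In c l -> 0 < w c -> Rabs (a c - v) <= eta) ->
  Rabs (Rsum_list (fun c => w c * a c) l / Rsum_list w l - v) <= eta.
Proof.
  intros Hw Hpos Ha.
  set (S := Rsum_list w l) in *.
  replace (Rsum_list (fun c => w c * a c) l / S - v)
    with ((Rsum_list (fun c => w c * a c) l - v * S) / S) by (field; lra).
  unfold Rdiv. rewrite Rabs_mult, (Rabs_right (/ S)) by (left; apply Rinv_0_lt_compat; lra).
  apply (Rmult_le_reg_r S); [lra|].
  rewrite Rmult_assoc, Rinv_l by lra. rewrite Rmult_1_r.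
  apply Rsum_list_weighted_dev; auto.
Qed.

Lemma Rsum_list_flat_map_seq_trunc {A : Type} (L : nat -> list A) (h : A -> R) (M M' : nat) :
  (forall k c, (M <= k)%nat -> In c (L k) -> h c = 0) -> (M <= M')%nat ->
  Rsum_list h (flat_map L (seq 0 M')) = Rsum_list h (flat_map L (seq 0 M)).
Proof.
  intros Hz Hle. induction M' as [|m IH].
  - replace M with 0%nat by lia. reflexivity.
  - destruct (Nat.eq_dec M (S m)) as [->|Hne]; [reflexivity|].
    rewrite seq_S, flat_map_app, Rsum_list_app, IH by lia. simpl.
    rewrite app_nil_r, (Rsum_list_eq0 h (L m)); [ring|].
    intros c Hc. apply (Hz m); auto; lia.
Qed.

Lemma Rsum_list_flat_map_seq_indep {A : Type} (L : nat -> list A) (h : A -> R) (M1 M2 : nat) :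
  (forall k c, (M1 <= k)%nat -> In c (L k) -> h c = 0) ->
  (forall k c, (M2 <= k)%nat -> In c (L k) -> h c = 0) ->
  Rsum_list h (flat_map L (seq 0 M1)) = Rsum_list h (flat_map L (seq 0 M2)).
Proof.
  intros H1 H2.
  rewrite <- (Rsum_list_flat_map_seq_trunc L h M1 (Nat.max M1 M2)) by (auto; lia).
  rewrite <- (Rsum_list_flat_map_seq_trunc L h M2 (Nat.max M1 M2)) by (auto; lia).
  reflexivity.
Qed.

Lemma ball_metric_open {T : Type} (d : T -> T -> R) (x : T) (r : R) :
  is_metric d -> metric_open d (ball d x r).
Proof.
  intros (_ & _ & _ & Htri) y Hy. unfold ball in *.
  exists (r - d x y). split; [lra|].
  intros z Hz. specialize (Htri x y z). lra.
Qed.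

Lemma ball_center {T : Type} (d : T -> T -> R) (x : T) (r : R) :
  is_metric d -> 0 < r -> ball d x r x.
Proof. intros (_ & Hd0 & _) Hr. unfold ball. rewrite (proj2 (Hd0 x x) eq_refl). exact Hr. Qed.

Lemma R_dist_ball_open (u e : R) : R_open (fun z => R_dist u z < e).
Proof.
  intros y Hy. exists (e - R_dist u y). split; [lra|].
  intros z Hz. unfold ball in Hz. pose proof (R_dist_tri u z y). lra.
Qed.

Lemma continuous_metric_at {T : Type} (OT : (T -> Prop) -> Prop) (d : T -> T -> R)
    (phi : T -> R) :
  induces d OT -> continuous OT R_open phi ->
  forall x e, 0 < e -> exists r, 0 < r /\ forall z, d x z < r -> R_dist (phi x) (phi z) < e.
Proof.
  intros Hind Hc x e He.
  assert (Ho := Hc _ (R_dist_ball_open (phi x) e)). apply Hind in Ho.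
  destruct (Ho x) as (r & Hr & H); [rewrite R_dist_eq; exact He|].
  exists r; split; auto.
Qed.

Lemma compact_finite_net {T : Type} (OT : (T -> Prop) -> Prop) (d : T -> T -> R)
    (C : T -> Prop) (e : R) :
  is_metric d -> induces d OT -> is_compact OT C -> 0 < e ->
  exists l : list T, (forall c, In c l -> C c) /\
    forall x, C x -> exists c, In c l /\ d c x < e.
Proof.
  intros Hd Hind HC He.
  destruct (HC (fun U => exists c, C c /\ U = ball d c e)) as (lU & HlU & Hcov).
  - intros U (c & _ & ->). apply Hind, ball_metric_open, Hd.
  - intros x Hx. exists (ball d x e). split; [eauto | apply ball_center; auto].
  - assert (Hcenters : exists l, (forall c, In c l -> C c) /\ lU = map (fun c => ball d c e) l).
    { clear Hcov. induction lU as [|U lU IH].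
      - exists nil. split; [contradiction | reflexivity].
      - destruct (HlU U (or_introl eq_refl)) as (c & Hc & ->).
        destruct IH as (l & Hl & ->); [intros; apply HlU; right; auto|].
        exists (c :: l). split; [intros c' [<-|]; auto | reflexivity]. }
    destruct Hcenters as (l & Hl & ->). exists l. split; auto.
    intros x Hx. destruct (Hcov x Hx) as (U & HU & HUx).
    apply in_map_iff in HU as (c & <- & Hc). exists c; auto.
Qed.

Section ProductContinuity.

Context {X Y : Type} (OX : (X -> Prop) -> Prop) (OY : (Y -> Prop) -> Prop).
Hypotheses (HX : is_topology OX) (HY : is_topology OY).

Definition prod_continuous_at (h : X * Y -> R) (p : X * Y) : Prop :=
  forall e, 0 < e -> exists U V, OX U /\ OY V /\ U (fst p) /\ V (snd p) /\
    forall a b, U a -> V b -> Rabs (h (a, b) - h p) < e.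

Lemma prod_continuous_at_continuous (h : X * Y -> R) :
  (forall p, prod_continuous_at h p) -> continuous (prod_open OX OY) R_open h.
Proof.
  intros H W HW p Hp. destruct (HW _ Hp) as (e & He & Hball).
  destruct (H p e He) as (U & V & HU & HV & HpU & HpV & Hh).
  exists U, V. repeat split; auto.
  intros a b Ha Hb. apply Hball. unfold ball, R_dist. rewrite Rabs_minus_sym. auto.
Qed.

Lemma prod_continuous_at_local (h h' : X * Y -> R) (p : X * Y) (U0 : X -> Prop) :
  OX U0 -> U0 (fst p) -> (forall a b, U0 a -> h (a, b) = h' (a, b)) ->
  prod_continuous_at h' p -> prod_continuous_at h p.
Proof.
  destruct p as [x y]; simpl. intros HU0 Hx Heq H e He.
  destruct (H e He) as (U & V & HU & HV & HxU & HyV & Hh).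
  destruct HX as (_ & _ & HXcap & _).
  exists (fun a => U0 a /\ U a), V. repeat split; auto.
  intros a b [Ha0 Ha] Hb. rewrite !Heq by auto. auto.
Qed.

Lemma prod_continuous_at_const (v : R) (p : X * Y) : prod_continuous_at (fun _ => v) p.
Proof.
  intros e He. exists (fun _ => True), (fun _ => True).
  destruct HX as (HXT & _), HY as (HYT & _). repeat split; auto.
  intros. rewrite Rminus_diag, Rabs_R0. exact He.
Qed.

Lemma prod_continuous_at_plus (h1 h2 : X * Y -> R) (p : X * Y) :
  prod_continuous_at h1 p -> prod_continuous_at h2 p ->
  prod_continuous_at (fun q => h1 q + h2 q) p.
Proof.
  intros H1 H2 e He.
  destruct (H1 (e / 2)) as (U1 & V1 & HU1 & HV1 & Hx1 & Hy1 & Hh1); [lra|].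
  destruct (H2 (e / 2)) as (U2 & V2 & HU2 & HV2 & Hx2 & Hy2 & Hh2); [lra|].
  destruct HX as (_ & _ & HXcap & _), HY as (_ & _ & HYcap & _).
  exists (fun a => U1 a /\ U2 a), (fun b => V1 b /\ V2 b). repeat split; auto.
  intros a b [Ha1 Ha2] [Hb1 Hb2].
  specialize (Hh1 a b Ha1 Hb1). specialize (Hh2 a b Ha2 Hb2).
  replace (h1 (a, b) + h2 (a, b) - (h1 p + h2 p))
    with ((h1 (a, b) - h1 p) + (h2 (a, b) - h2 p)) by ring.
  eapply Rle_lt_trans; [apply Rabs_triang | lra].
Qed.

Lemma prod_continuous_at_comp (F : R -> R) (h : X * Y -> R) (p : X * Y) :
  prod_continuous_at h p -> continuity_pt F (h p) ->
  prod_continuous_at (fun q => F (h q)) p.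
Proof.
  intros H HF e He.
  destruct (HF e He) as (r & Hr & HFr).
  destruct (H r Hr) as (U & V & HU & HV & Hx & Hy & Hh).
  exists U, V. repeat split; auto.
  intros a b Ha Hb. destruct (Req_dec (h (a, b)) (h p)) as [Heq|Hne].
  - rewrite Heq, Rminus_diag, Rabs_R0. exact He.
  - apply (HFr (h (a, b))). split; [split; [exact I | auto] | apply Hh; auto].
Qed.

(* Products reduce to sums and squares: 4 u v = (u + v)^2 - (u - v)^2. *)
Lemma prod_continuous_at_mult (h1 h2 : X * Y -> R) (p : X * Y) :
  prod_continuous_at h1 p -> prod_continuous_at h2 p ->
  prod_continuous_at (fun q => h1 q * h2 q) p.
Proof.
  assert (Hsq : forall u, continuity_pt (fun u => u * u) u).
  { intros u. apply (continuity_pt_mult id id); apply derivable_continuous_pt, derivable_pt_id. }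
  assert (Hscal : forall c u, continuity_pt (fun u => c * u) u).
  { intros c u. apply (continuity_pt_scal id); apply derivable_continuous_pt, derivable_pt_id. }
  intros H1 H2.
  assert (Hdiff : prod_continuous_at (fun q => h1 q + -1 * h2 q) p).
  { apply prod_continuous_at_plus; auto. apply (prod_continuous_at_comp (fun u => -1 * u)); auto. }
  apply (prod_continuous_at_local _ (fun q => / 4 * ((h1 q + h2 q) * (h1 q + h2 q)
           + -1 * ((h1 q + -1 * h2 q) * (h1 q + -1 * h2 q)))) p (fun _ => True));
    [exact (proj1 HX) | exact I | intros; field |].
  apply (prod_continuous_at_comp (fun u => / 4 * u)); auto.
  apply prod_continuous_at_plus.
  - apply (prod_continuous_at_comp (fun u => u * u)); auto.
    apply prod_continuous_at_plus; auto.
  - apply (prod_continuous_at_comp (fun u => -1 * u)); auto.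
    apply (prod_continuous_at_comp (fun u => u * u)); auto.
Qed.

Lemma prod_continuous_at_div (h1 h2 : X * Y -> R) (p : X * Y) :
  prod_continuous_at h1 p -> prod_continuous_at h2 p -> h2 p <> 0 ->
  prod_continuous_at (fun q => h1 q / h2 q) p.
Proof.
  intros H1 H2 Hne. apply prod_continuous_at_mult; auto.
  apply (prod_continuous_at_comp (fun u => / u)); auto.
  apply (continuity_pt_inv id); auto. apply derivable_continuous_pt, derivable_pt_id.
Qed.

Lemma prod_continuous_at_Rsum_list {A : Type} (h : A -> X * Y -> R) (l : list A) (p : X * Y) :
  (forall c, In c l -> prod_continuous_at (h c) p) ->
  prod_continuous_at (fun q => Rsum_list (fun c => h c q) l) p.
Proof.
  induction l as [|c l IH]; simpl; intros H.
  - apply prod_continuous_at_const.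
  - apply (prod_continuous_at_plus (h c)); auto.
Qed.

Lemma prod_continuous_at_fst (d : X -> X -> R) (phi : X -> R) (p : X * Y) :
  is_metric d -> induces d OX ->
  (forall e, 0 < e -> exists r, 0 < r /\
     forall a, d (fst p) a < r -> Rabs (phi a - phi (fst p)) < e) ->
  prod_continuous_at (fun q => phi (fst q)) p.
Proof.
  intros Hd Hind H e He. destruct (H e He) as (r & Hr & Hphi).
  exists (ball d (fst p) r), (fun _ => True).
  split; [apply Hind, ball_metric_open, Hd|].
  split; [apply (proj1 HY)|].
  split; [apply ball_center; auto|].
  split; [exact I|]. intros a b Ha _. apply Hphi, Ha.
Qed.

Lemma prod_continuous_at_snd (psi : Y -> R) (p : X * Y) :
  continuous OY R_open psi -> prod_continuous_at (fun q => psi (snd q)) p.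
Proof.
  intros Hc e He. exists (fun _ => True), (fun b => R_dist (psi (snd p)) (psi b) < e).
  split; [apply (proj1 HX)|]. split; [apply (Hc _ (R_dist_ball_open _ _))|].
  split; [exact I|]. split; [rewrite R_dist_eq; exact He|].
  intros a b _ Hb. unfold R_dist in Hb. rewrite Rabs_minus_sym. exact Hb.
Qed.

End ProductContinuity.

Section Approximation.

Context {X Y : Type} (OX : (X -> Prop) -> Prop) (OY : (Y -> Prop) -> Prop).
Hypotheses (HX : is_topology OX) (HY : is_topology OY).
Variable f : X * Y -> R.
Hypothesis Hf : separately_continuous OX OY f.
Variable d : X -> X -> R.
Hypotheses (Hd : is_metric d) (Hind : induces d OX).
Variable K : nat -> X -> Prop.
Hypothesis HKcov : forall x, exists k, K k x.
Variable delta : R.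
Hypothesis Hdelta : 0 < delta.
Variable N : X -> nat.
Hypothesis HN : forall x k, (N x <= k)%nat -> forall z, ball d x delta z -> ~ K k z.

Definition radius (n : nat) : R := delta / 2 / (INR n + 1).

Variable net : nat -> nat -> list X.
Hypotheses (net_sub : forall n k c, In c (net n k) -> K k c)
  (net_cover : forall n k x, K k x -> exists c, In c (net n k) /\ d c x < radius n).

Definition tent (e : R) (c x : X) : R := Rmax 0 (e - d c x).

Definition centers (n M : nat) : list X := flat_map (net n) (seq 0 M).

Definition tent_average (n M : nat) (q : X * Y) : R :=
  Rsum_list (fun c => tent (radius n) c (fst q) * f (c, snd q)) (centers n M)
  / Rsum_list (fun c => tent (radius n) c (fst q)) (centers n M).

Definition approx (n : nat) (q : X * Y) : R := tent_average n (N (fst q)) q.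

Lemma radius_gt0 (n : nat) : 0 < radius n.
Proof.
  unfold radius. pose proof (pos_INR n).
  apply Rdiv_lt_0_compat; lra.
Qed.

Lemma radius_le (n : nat) : radius n <= delta / 2.
Proof.
  unfold radius. pose proof (pos_INR n).
  apply (Rmult_le_reg_r (INR n + 1)); [lra|].
  unfold Rdiv at 1. rewrite Rmult_assoc, Rinv_l by lra. nra.
Qed.

Lemma radius_eventually_lt (r : R) :
  0 < r -> exists n0, forall n, (n0 <= n)%nat -> radius n < r.
Proof.
  intros Hr. destruct (archimed_cor1 (2 * r / delta)) as (n0 & Hn0 & Hn0pos).
  { apply Rdiv_lt_0_compat; lra. }
  exists n0. intros n Hn. apply le_INR in Hn. apply lt_INR in Hn0pos. simpl in Hn0pos.
  unfold radius. apply (Rmult_lt_reg_r (INR n + 1)); [lra|].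
  unfold Rdiv at 1. rewrite Rmult_assoc, Rinv_l by lra.
  assert (/ INR n0 * INR n0 = 1) by (apply Rinv_l; lra).
  assert (delta * (/ INR n0 * INR n0) < delta * (2 * r / delta * INR n0))
    by (apply Rmult_lt_compat_l; [lra | apply Rmult_lt_compat_r; lra]).
  replace (delta * (2 * r / delta * INR n0)) with (2 * r * INR n0) in * by (field; lra).
  nra.
Qed.

Lemma tent_ge0 (e : R) (c x : X) : 0 <= tent e c x.
Proof. apply Rmax_l. Qed.

Lemma tent_gt0 (e : R) (c x : X) : d c x < e -> 0 < tent e c x.
Proof. intros H. unfold tent. eapply Rlt_le_trans; [|apply Rmax_r]. lra. Qed.

Lemma tent_gt0_near (e : R) (c x : X) : 0 < tent e c x -> d c x < e.
Proof.
  unfold tent, Rmax. destruct (Rle_dec 0 (e - d c x)); lra.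
Qed.

Lemma tent_lipschitz (e : R) (c a b : X) : Rabs (tent e c b - tent e c a) <= d a b.
Proof.
  destruct Hd as (_ & _ & Hsym & Htri).
  pose proof (Htri c a b). pose proof (Htri c b a). pose proof (Hsym a b).
  unfold tent, Rmax. destruct (Rle_dec 0 (e - d c b)), (Rle_dec 0 (e - d c a));
    unfold Rabs; destruct Rcase_abs; lra.
Qed.

(* Net points of K k with k >= N x lie at distance >= delta from x,
   so their tents (of radius <= delta / 2) vanish on the ball of radius delta / 2. *)
Lemma tent_vanishes_far (n k : nat) (x a c : X) :
  d x a < delta / 2 -> (N x <= k)%nat -> In c (net n k) -> tent (radius n) c a = 0.
Proof.
  intros Ha Hk Hc. unfold tent.
  destruct (Rle_dec (radius n - d c a) 0) as [Hle|Hgt]; [apply Rmax_left; exact Hle|].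
  exfalso. apply (HN x k Hk c); [|apply (net_sub n k c Hc)].
  destruct Hd as (_ & _ & Hsym & Htri). unfold ball.
  pose proof (Htri x a c). pose proof (Hsym a c). pose proof (radius_le n). lra.
Qed.

Lemma tent_average_indep (n : nat) (x a : X) (b : Y) :
  d x a < delta / 2 -> tent_average n (N a) (a, b) = tent_average n (N x) (a, b).
Proof.
  intros Ha.
  assert (Haa : d a a < delta / 2) by (rewrite (proj2 (proj1 (proj2 Hd) a a) eq_refl); lra).
  unfold tent_average, centers; simpl. f_equal; apply Rsum_list_flat_map_seq_indep;
    intros k c Hk Hc; match type of Hk with (N ?z <= _)%nat =>
      rewrite (tent_vanishes_far n k z a c) by auto; ring end.
Qed.

Lemma tent_total_gt0 (n : nat) (x : X) :
  0 < Rsum_list (fun c => tent (radius n) c x) (centers n (N x)).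
Proof.
  destruct (HKcov x) as [k Hk].
  assert (Hkx : (k < N x)%nat).
  { destruct (Nat.lt_ge_cases k (N x)) as [|Hge]; auto.
    exfalso. apply (HN x k Hge x); [apply ball_center|]; auto. }
  destruct (net_cover n k x Hk) as (c & Hc & Hcx).
  apply (Rsum_list_gt0 _ _ c).
  - intros; apply tent_ge0.
  - apply in_flat_map. exists k. split; auto. apply in_seq. lia.
  - apply tent_gt0, Hcx.
Qed.

Lemma tent_average_continuous_at (n M : nat) (p : X * Y) :
  Rsum_list (fun c => tent (radius n) c (fst p)) (centers n M) <> 0 ->
  prod_continuous_at OX OY (tent_average n M) p.
Proof.
  assert (Htent : forall c, prod_continuous_at OX OY (fun q => tent (radius n) c (fst q)) p).
  { intros c. apply (prod_continuous_at_fst OX OY HY d); auto.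
    intros e He. exists e. split; auto. intros a Ha.
    eapply Rle_lt_trans; [apply tent_lipschitz | exact Ha]. }
  intros Hne. apply prod_continuous_at_div; auto.
  - apply (prod_continuous_at_Rsum_list OX OY HX HY
             (fun c q => tent (radius n) c (fst q) * f (c, snd q))).
    intros c _. apply prod_continuous_at_mult; auto.
    apply (prod_continuous_at_snd OX OY HX (fun b => f (c, b))), (proj2 Hf).
  - apply (prod_continuous_at_Rsum_list OX OY HX HY
             (fun c q => tent (radius n) c (fst q))).
    auto.
Qed.

(* Near x0, approx n agrees with the single finite average indexed by N x0. *)
Lemma approx_continuous (n : nat) : continuous (prod_open OX OY) R_open (approx n).
Proof.
  apply prod_continuous_at_continuous. intros [x0 y0].
  apply (prod_continuous_at_local OX OY HX _ (tent_average n (N x0)) _ (ball d x0 (delta / 2))).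
  - apply Hind, ball_metric_open, Hd.
  - apply ball_center; auto; lra.
  - intros a b Ha. apply tent_average_indep, Ha.
  - apply tent_average_continuous_at, Rgt_not_eq, tent_total_gt0.
Qed.

Lemma approx_cv (p : X * Y) : Un_cv (fun n => approx n p) (f p).
Proof.
  destruct p as [x y]. intros eta Heta.
  destruct (continuous_metric_at OX d (fun z => f (z, y)) Hind (proj1 Hf y) x (eta / 2))
    as (r & Hr & Hfr); [lra|].
  destruct (radius_eventually_lt r Hr) as [n0 Hn0].
  exists n0. intros n Hn. unfold R_dist, approx, tent_average. simpl.
  apply (Rle_lt_trans _ (eta / 2)); [|lra].
  apply Rsum_list_weighted_average.
  - intros; apply tent_ge0.
  - apply tent_total_gt0.
  - intros c _ Hc. apply tent_gt0_near in Hc.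
    assert (Hxc : d x c < r).
    { rewrite (proj1 (proj2 (proj2 Hd))). specialize (Hn0 n Hn). lra. }
    specialize (Hfr c Hxc). unfold R_dist in Hfr. rewrite Rabs_minus_sym. lra.
Qed.

End Approximation.

Theorem mainTheorem3 (X Y : Type)
  (OX : (X -> Prop) -> Prop) (OY : (Y -> Prop) -> Prop)
  (HX : is_topology OX) (HY : is_topology OY)
  (Hsig : sigma_compact OX)
  (f : X * Y -> R) (Hf : separately_continuous OX OY f)
  (d : X -> X -> R) (Hd : is_metric d) (Hind : induces d OX)
  (K : nat -> (X -> Prop)) (HKc : forall n, is_compact OX (K n))
  (HKcov : forall x, exists n, K n x)
  (delta : R) (Hdelta : 0 < delta)
  (Hloc : forall x, exists N : nat, forall n, (N <= n)%nat ->
            forall z, ball d x delta z -> ~ K n z) :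
  exists g : nat -> X * Y -> R,
    (forall n, continuous (prod_open OX OY) R_open (g n)) /\
    (forall p, Un_cv (fun n => g n p) (f p)).
Proof.
  destruct (functional_choice _ Hloc) as [N HN].
  assert (Hnets : forall nk : nat * nat, exists l : list X,
    (forall c, In c l -> K (snd nk) c) /\
    forall x, K (snd nk) x -> exists c, In c l /\ d c x < radius delta (fst nk)).
  { intros [n k]. apply (compact_finite_net OX); auto. apply radius_gt0, Hdelta. }
  destruct (functional_choice _ Hnets) as [net Hnet].
  set (nets := fun n k => net (n, k)).
  assert (Hsub : forall n k c, In c (nets n k) -> K k c) by (intros n k; apply (Hnet (n, k))).
  assert (Hcover : forall n k x, K k x -> exists c, In c (nets n k) /\ d c x < radius delta n)
    by (intros n k; apply (Hnet (n, k))).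
  exists (approx f d delta N nets). split.
  - intros n. exact (approx_continuous OX OY HX HY f Hf d Hd Hind K HKcov delta Hdelta
                       N HN nets Hsub Hcover n).
  - exact (approx_cv OX OY f Hf d Hd Hind K HKcov delta Hdelta N HN nets Hcover).
Qed.
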